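(* Let $\mathcal A$ be a non-associative algebra. If there exists a qualitative representation $\phi$ of $\mathcal A$ such that for all $a,b,c,d\in A$ $$(a^\phi\circ b^\phi)\cap(c^\phi\circ d^\phi)=\varnothing\iff (a;b)\cdot(c;d)=0,$$ then $\mathcal A$ is associative, i.e. $(a;b);c=a;(b;c)$ for all $a,b,c\in A$.
   Context: A non-associative algebra is an algebra $(A,0,1,+,-,1',\breve{\ },;)$ such that $(A,0,1,+,-)$ is a boolean algebra (with $x\cdot y=-(-x+-y)$ and $x\le y\iff x+y=y$); $1';x=x=x;1'$, $\breve{\breve x}=x$, $(x;y)\breve{}=\breve y;\breve x$; $\breve 0=x;0=0$, $(x+y)\breve{}=\breve x+\breve y$, $x;(y+z)=x;y+x;z$; and the Peircean law holds: $x;y\cdot\breve z=0$ iff $y;z\cdot\breve x=0$. For binary relations, $r\circ s=\{(x,y):\exists z\,(x,z)\in r,(z,y)\in s\}$, $\breve r=\{(y,x):(x,y)\in r\}$, $\mathrm{Id}_D=\{(x,x):x\in D\}$. A qualitative representation of $\mathcal A$ over base $D$ is an injective map $\phi:A\to\wp(D\times D)$ such that $0^\phi=\varnothing$, $1^\phi=D\times D$, $(1')^\phi=\mathrm{Id}_D$, $(a+b)^\phi=a^\phi\cup b^\phi$, $(-a)^\phi=(D\times D)\setminus a^\phi$, $(\breve a)^\phi=(a^\phi)\breve{}$, and for all $a,b,c\in A$: $c^\phi\supseteq a^\phi\circ b^\phi\iff c\ge a;b$. *)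

Record NAAlg := {
  carrier :> Type;
  zero : carrier;
  one : carrier;
  plus : carrier -> carrier -> carrier;
  compl : carrier -> carrier;
  ident : carrier;
  conv : carrier -> carrier;
  comp : carrier -> carrier -> carrier
}.

Definition meet (A : NAAlg) (x y : A) : A :=
  compl A (plus A (compl A x) (compl A y)).

Definition le (A : NAAlg) (x y : A) : Prop := plus A x y = y.

(* (A,0,1,+,-) is a boolean algebra: Huntington's (1904) axioms. *)
Definition is_boolean_algebra (A : NAAlg) : Prop :=
  (forall x y : A, plus A x y = plus A y x) /\
  (forall x y : A, meet A x y = meet A y x) /\
  (forall x y z : A, plus A x (meet A y z) = meet A (plus A x y) (plus A x z)) /\
  (forall x y z : A, meet A x (plus A y z) = plus A (meet A x y) (meet A x z)) /\
  (forall x : A, plus A x (zero A) = x) /\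
  (forall x : A, meet A x (one A) = x) /\
  (forall x : A, plus A x (compl A x) = one A) /\
  (forall x : A, meet A x (compl A x) = zero A).

Definition is_non_associative_algebra (A : NAAlg) : Prop :=
  is_boolean_algebra A /\
  (forall x : A, comp A (ident A) x = x /\ comp A x (ident A) = x) /\
  (forall x : A, conv A (conv A x) = x) /\
  (forall x y : A, conv A (comp A x y) = comp A (conv A y) (conv A x)) /\
  (conv A (zero A) = zero A) /\
  (forall x : A, comp A x (zero A) = zero A) /\
  (forall x y : A, conv A (plus A x y) = plus A (conv A x) (conv A y)) /\
  (forall x y z : A, comp A x (plus A y z) = plus A (comp A x y) (comp A x z)) /\
  (forall x y z : A,
     meet A (comp A x y) (conv A z) = zero A <->
     meet A (comp A y z) (conv A x) = zero A).

Definition rel (D : Type) := D -> D -> Prop.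
Definition rel_eq {D} (r s : rel D) : Prop := forall x y, r x y <-> s x y.
Definition rel_sub {D} (r s : rel D) : Prop := forall x y, r x y -> s x y.
Definition rel_comp {D} (r s : rel D) : rel D :=
  fun x y => exists z, r x z /\ s z y.
Definition rel_conv {D} (r : rel D) : rel D := fun x y => r y x.
Definition rel_empty {D} : rel D := fun _ _ => False.
Definition rel_full {D} : rel D := fun _ _ => True.
Definition rel_id {D} : rel D := fun x y => x = y.
Definition rel_union {D} (r s : rel D) : rel D := fun x y => r x y \/ s x y.
Definition rel_cmpl {D} (r : rel D) : rel D := fun x y => ~ r x y.
Definition rel_inter {D} (r s : rel D) : rel D := fun x y => r x y /\ s x y.

Definition qualitative_representation (A : NAAlg) (D : Type)
    (phi : A -> rel D) : Prop :=
  (forall a b : A, rel_eq (phi a) (phi b) -> a = b) /\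
  rel_eq (phi (zero A)) rel_empty /\
  rel_eq (phi (one A)) rel_full /\
  rel_eq (phi (ident A)) rel_id /\
  (forall a b : A, rel_eq (phi (plus A a b)) (rel_union (phi a) (phi b))) /\
  (forall a : A, rel_eq (phi (compl A a)) (rel_cmpl (phi a))) /\
  (forall a : A, rel_eq (phi (conv A a)) (rel_conv (phi a))) /\
  (forall a b c : A,
     rel_sub (rel_comp (phi a) (phi b)) (phi c) <-> le A (comp A a b) c).

(* Write [e := a;(b;c)]. If [u (a;b) w] and [w c v] but not [u e v], then the
   pair [(u,w)] lies in [phi (a;b) o phi 1'] and in [phi (-e) o phi (conv c)],
   so [(a;b).(-e;conv c) <> 0]; yet no pair lies in [phi a o phi b] and
   [phi (-e) o phi (conv c)], since such a pair closes a path [a;b;c] whose ends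
   are [-e]-related. The hypothesis on [phi] turns this discrepancy into a
   contradiction, so [(a;b);c <= a;(b;c)]. The converse inequality is the same
   one for the converses, and [<=] is antisymmetric. *)

From Stdlib Require Import Classical.

Lemma le_antisym (A : NAAlg) (plusC : forall x y : A, plus A x y = plus A y x)
    (x y : A) :
  le A x y -> le A y x -> x = y.
Proof.
  unfold le; intros Hxy Hyx.
  now rewrite <- Hyx, plusC.
Qed.

Lemma le_conv (A : NAAlg)
    (conv_plus : forall x y : A, conv A (plus A x y) = plus A (conv A x) (conv A y))
    (x y : A) :
  le A x y -> le A (conv A x) (conv A y).
Proof.
  unfold le; intros Hxy.
  now rewrite <- conv_plus, Hxy.
Qed.

Lemma comp_assoc_of_le (A : NAAlg) (HA : is_non_associative_algebra A) :
  (forall a b c : A, le A (comp A (comp A a b) c) (comp A a (comp A b c))) ->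
  forall a b c : A, comp A (comp A a b) c = comp A a (comp A b c).
Proof.
  destruct HA as [[plusC _] [_ [convK [conv_comp [_ [_ [conv_plus _]]]]]]].
  intros Hle a b c.
  apply le_antisym; [exact plusC | apply Hle |].
  assert (Hconv := le_conv A conv_plus _ _ (Hle (conv A c) (conv A b) (conv A a))).
  rewrite <- !conv_comp, !convK in Hconv.
  exact Hconv.
Qed.

Section QualitativeRepresentation.

Variables (A : NAAlg) (D : Type) (phi : A -> rel D).
Hypothesis HA : is_non_associative_algebra A.
Hypothesis Hphi : qualitative_representation A D phi.
Hypothesis phi_disjoint : forall a b c d : A,
  rel_eq (rel_inter (rel_comp (phi a) (phi b)) (rel_comp (phi c) (phi d))) rel_empty
  <-> meet A (comp A a b) (comp A c d) = zero A.

Lemma qrep_le_refl (x : A) : le A x x.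
Proof.
  destruct Hphi as [phi_inj [_ [_ [_ [phi_plus _]]]]].
  apply phi_inj; intros u v.
  specialize (phi_plus x x u v); unfold rel_union in phi_plus; tauto.
Qed.

Lemma qrep_comp_sub (x y : A) :
  rel_sub (rel_comp (phi x) (phi y)) (phi (comp A x y)).
Proof.
  destruct Hphi as [_ [_ [_ [_ [_ [_ [_ phi_comp]]]]]]].
  apply phi_comp, qrep_le_refl.
Qed.

Lemma qrep_comp_assoc_le (a b c : A) :
  le A (comp A (comp A a b) c) (comp A a (comp A b c)).
Proof.
  destruct HA as [_ [comp_ident _]].
  destruct Hphi as [_ [_ [_ [phi_ident [_ [phi_compl [phi_conv phi_comp]]]]]]].
  set (e := comp A a (comp A b c)).
  apply phi_comp; intros u v [w [Hab Hc]].
  destruct (classic (phi e u v)) as [He | Hne]; [exact He | exfalso].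
  assert (Hzero : meet A (comp A a b) (comp A (compl A e) (conv A c)) = zero A).
  { apply phi_disjoint; intros x y; split; [| intros []].
    intros [[s [Hxs Hsy]] [t [Hxt Hty]]].
    apply (phi_compl e x t) in Hxt; apply (phi_conv c t y) in Hty.
    apply Hxt, qrep_comp_sub; exists s; split; [exact Hxs |].
    apply qrep_comp_sub; exists y; split; assumption. }
  rewrite <- (proj2 (comp_ident (comp A a b))) in Hzero.
  apply (proj2 (phi_disjoint _ _ _ _) Hzero u w); split.
  - exists w; split; [exact Hab | now apply phi_ident].
  - exists v; split; [now apply phi_compl | now apply phi_conv].
Qed.

End QualitativeRepresentation.

Theorem mainTheorem4 (A : NAAlg) (HA : is_non_associative_algebra A) :
  (exists (D : Type) (phi : A -> rel D),
     qualitative_representation A D phi /\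
     (forall a b c d : A,
        rel_eq (rel_inter (rel_comp (phi a) (phi b)) (rel_comp (phi c) (phi d)))
               rel_empty
        <-> meet A (comp A a b) (comp A c d) = zero A)) ->
  forall a b c : A, comp A (comp A a b) c = comp A a (comp A b c).
Proof.
  intros [D [phi [Hphi phi_disjoint]]].
  apply comp_assoc_of_le; [exact HA |].
  exact (qrep_comp_assoc_le A D phi HA Hphi phi_disjoint).
Qed.
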